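(* Let $p$ be the POP of length 4 defined by the single relation $1>4$ (labels $2,3$ isolated); equivalently, avoiding $p$ means avoiding all 12 patterns of length 4 whose first entry exceeds the last. Let $a(n)=|S_n(p)|$. Then $a(0)=a(1)=1$, $a(2)=2$, $a(3)=6$, and for $n\geq 4$, $$a(n)=a(n-1)+a(n-2)+3a(n-3)+a(n-4).$$ Moreover, $$\sum_{n\geq 0}a(n)x^n=\frac{1}{1-x-x^2-3x^3-x^4}.$$
   Context: An $n$-permutation is a word $\pi=\pi_1\cdots\pi_n$ containing each of $1,\ldots,n$ exactly once; $S_n$ is the set of $n$-permutations ($S_0$ consists of the empty permutation). A partially ordered pattern (POP) $p$ of length $k$ is a partial order on the label set $\{1,\ldots,k\}$; it is described by a set of generating relations, where a relation $x>y$ means that in an occurrence the entry in the $x$-th chosen position must be larger than the entry in the $y$-th chosen position, and labels not involved in any relation are unconstrained. An $n$-permutation $\pi$ contains $p$ if there are indices $1\leq i_1<\cdots<i_k\leq n$ such that $\pi_{i_x}>\pi_{i_y}$ whenever $x>y$ in the partial order; otherwise $\pi$ avoids $p$. $S_n(p)$ denotes the set of $n$-permutations avoiding $p$. *)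

From HB Require Import structures.
From mathcomp Require Import all_boot all_order all_algebra all_fingroup.
Set Implicit Arguments. Unset Strict Implicit. Unset Printing Implicit Defensive.
Import GRing.Theory.

(* A partially ordered pattern of length k, given by generating relations;
   labels are 0-indexed: label x of the paper is the ordinal x-1.
   A pair (x, y) in pop_rel means "x > y". *)
Record POP := { pop_len : nat; pop_rel : seq ('I_pop_len * 'I_pop_len) }.

Definition pop_contains (p : POP) (n : nat) (pi : 'S_n) : bool :=
  [exists idx : {ffun 'I_(pop_len p) -> 'I_n},
     [forall i : 'I_(pop_len p), forall j : 'I_(pop_len p),
        (i < j)%N ==> (idx i < idx j)%N]
     && all (fun r => (pi (idx r.2) < pi (idx r.1))%N) (pop_rel p)].

Definition pop_avoids (p : POP) (n : nat) (pi : 'S_n) : bool :=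
  ~~ pop_contains p pi.

Definition num_avoiders (p : POP) (n : nat) : nat :=
  #|[set pi : 'S_n | pop_avoids p pi]|.

Definition pop_1gt4 : POP :=
  {| pop_len := 4; pop_rel := [:: (inord 0 : 'I_4, inord 3 : 'I_4)] |}.

Definition den_1gt4 : {poly int} :=
  1 - 'X - 'X^2 - 3%:P * 'X^3 - 'X^4.

(* Avoiding the pattern with the single relation 1 > 4 means that every entry
   is smaller than all entries at distance at least 3 to its right.  In such a
   permutation of length n >= 4 every value v smaller than the i-th entry must
   occur among the first i + 3 entries; applied to the first two entries this
   forces the permutation to begin with exactly one of the blocks
   0, 10, 120, 201, 210, 1302.  Removing the block and subtracting its length k
   from the remaining values is a bijection onto the avoiders of length n - k,
   so a(n) = a(n-1) + a(n-2) + 3 a(n-3) + a(n-4), and the generating function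
   follows coefficientwise from the recurrence. *)

From HB Require Import structures.
From mathcomp Require Import all_boot all_order all_algebra all_fingroup.
From mathcomp Require Import zify.
Import GRing.Theory.
Set Implicit Arguments. Unset Strict Implicit. Unset Printing Implicit Defensive.

Definition gap_sorted (d : nat) (t : seq nat) : bool :=
  all (fun l => all (fun i => (i + d <= l) ==> (nth 0 t i < nth 0 t l))
    (iota 0 (size t))) (iota 0 (size t)).

Lemma gap_sortedP d t :
  reflect (forall i l, i + d <= l -> l < size t -> nth 0 t i < nth 0 t l)
          (gap_sorted d t).
Proof.
apply: (iffP allP) => [H i l Hil Hl | H l].
  have Hi : i \in iota 0 (size t) by rewrite mem_iota; lia.
  have Hl' : l \in iota 0 (size t) by rewrite mem_iota.
  by move/allP: (H l Hl') => /(_ i Hi) /implyP; apply.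
rewrite mem_iota => /andP [_ Hl]; apply/allP => i _; apply/implyP => Hil.
exact: H.
Qed.

Lemma gap_sorted_small d t : size t <= d -> gap_sorted d t.
Proof. by move=> Ht; apply/gap_sortedP => i l Hil Hl; lia. Qed.

Lemma gap_sorted_cat_shift d s t k : all (fun x => x < k) s -> gap_sorted d s ->
  gap_sorted d (s ++ map (addn k) t) = gap_sorted d t.
Proof.
move=> /allP Hk /gap_sortedP Hs; apply/gap_sortedP/gap_sortedP => H i l Hil Hl.
  have := H (size s + i) (size s + l); rewrite size_cat size_map !nth_cat.
  by rewrite !ltnNge !leq_addr /= !addKn !(nth_map 0); lia.
rewrite size_cat size_map in Hl; rewrite !nth_cat.
have [Hls | Hls] := ltnP l (size s).
  by rewrite ifT ?Hls ?Hs //; lia.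
have [His | His] := ltnP i (size s); rewrite [nth _ _ (l - _)](nth_map 0); try lia.
  by apply: ltn_addr; apply/Hk/mem_nth.
by rewrite (nth_map 0) ?ltn_add2l; [apply: H|]; lia.
Qed.

Lemma below_in_take d t i v : perm_eq t (iota 0 (size t)) -> gap_sorted d t ->
  v < nth 0 t i -> v \in take (i + d) t.
Proof.
move=> Ht /gap_sortedP Hg Hv.
have mem_t x : (x \in t) = (x < size t) by rewrite (perm_mem Ht) mem_iota.
have Hi : i < size t by rewrite ltnNge; apply: contraTN Hv => /(nth_default 0) ->.
have vt : v \in t by rewrite mem_t (ltn_trans Hv) // -mem_t mem_nth.
have Hl : index v t < size t by rewrite index_mem.
have Hli : index v t < i + d.
  rewrite ltnNge; apply/negP => Hil.
  by have := Hg i _ Hil Hl; rewrite nth_index //; lia.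
by rewrite -(nth_index 0 vt) -(nth_take 0 Hli) mem_nth // size_take_min; lia.
Qed.

Lemma gap_sorted3_head (x0 x1 x2 x3 : nat) (r : seq nat) :
  perm_eq [:: x0, x1, x2, x3 & r] (iota 0 (size r).+4) ->
  gap_sorted 3 [:: x0, x1, x2, x3 & r] ->
  x0 = 0 \/ x0 = 1 /\ x1 = 0 \/ x0 = 1 /\ x1 = 2 /\ x2 = 0 \/
  x0 = 2 /\ x1 = 0 /\ x2 = 1 \/ x0 = 2 /\ x1 = 1 /\ x2 = 0 \/
  x0 = 1 /\ x1 = 3 /\ x2 = 0 /\ x3 = 2.
Proof.
move=> Ht Hg.
have E0 v : v < x0 -> v = x1 \/ v = x2.
  move=> Hv; move: Hv (below_in_take (i := 0) Ht Hg Hv).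
  rewrite (_ : 0 + 3 = 3) //= !inE.
  by move=> Hv /or3P [] /eqP; auto; lia.
have E1 v : v < x1 -> v = x0 \/ v = x2 \/ v = x3.
  move=> Hv; move: Hv (below_in_take (i := 1) Ht Hg Hv).
  rewrite (_ : 1 + 3 = 4) //= take0 !inE.
  by move=> Hv /or4P [] /eqP; auto; lia.
have : uniq [:: x0; x1; x2; x3].
  by apply: subseq_uniq (prefix_subseq _ r) _; rewrite (perm_uniq Ht) iota_uniq.
rewrite /= !inE !negb_or.
move=> /and4P [/and3P [/eqP ? /eqP ? /eqP ?] /andP [/eqP ? /eqP ?] /eqP ? _].
have : x0 = 0 \/ x0 = 1 \/ x0 = 2.
  by have := E0 0; have := E0 1; have := E0 2; lia.
case=> [|[|]] x0E; subst x0; first by left.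
- case: (E0 0 isT) => [x1E|x2E]; first by right; left.
  have : x1 = 2 \/ x1 = 3 \/ 4 <= x1 by lia.
  case=> [x1E|[x1E|x1_ge4]].
  + by right; right; left.
  + by do 5 right; have := E1 2; lia.
  + by exfalso; have := E1 2; have := E1 3; lia.
- by do 3 right; have := E0 0; have := E0 1; lia.
Qed.

Definition blocks_1gt4 : seq (seq nat) :=
  [:: [:: 0]; [:: 1; 0]; [:: 1; 2; 0]; [:: 2; 0; 1]; [:: 2; 1; 0]; [:: 1; 3; 0; 2]].

Lemma count_prefix_blocks_1gt4 t : perm_eq t (iota 0 (size t)) -> gap_sorted 3 t ->
  4 <= size t -> count (fun b => prefix b t) blocks_1gt4 = 1.
Proof.
case: t => [|x0 [|x1 [|x2 [|x3 r]]]] // Ht Hg _.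
by case: (gap_sorted3_head Ht Hg) =>
  [->|[[-> ->]|[[-> [-> ->]]|[[-> [-> ->]]|[[-> [-> ->]]|[-> [-> [-> ->]]]]]]]];
  rewrite /= ?prefix0s.
Qed.

Definition oneline n (s : 'S_n) : seq nat := [seq val (s i) | i <- enum 'I_n].

Lemma size_oneline n (s : 'S_n) : size (oneline s) = n.
Proof. by rewrite size_map size_enum_ord. Qed.

Lemma nth_oneline n (s : 'S_n) (i : 'I_n) : nth 0 (oneline s) i = s i.
Proof. by rewrite (nth_map i) ?size_enum_ord // nth_ord_enum. Qed.

Lemma oneline_inj n : injective (@oneline n).
Proof.
move=> s1 s2 E; apply/permP => i; apply: ord_inj.
by rewrite -!nth_oneline E.
Qed.

Lemma perm_eq_oneline n (s : 'S_n) : perm_eq (oneline s) (iota 0 n).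
Proof.
apply: uniq_perm; rewrite ?iota_uniq //.
  by rewrite map_inj_uniq ?enum_uniq // => i j /val_inj /perm_inj.
move=> x; rewrite mem_iota add0n /=; apply/mapP/idP => [[i _ ->] | Hx].
  exact: ltn_ord.
by exists ((s^-1)%g (Ordinal Hx)); rewrite ?mem_enum ?permKV.
Qed.

Lemma oneline_surj n t : perm_eq t (iota 0 n) -> exists s : 'S_n, oneline s = t.
Proof.
move=> Ht; have Hsz : size t = n by rewrite (perm_size Ht) size_iota.
have Hlt (i : 'I_n) : nth 0 t i < n.
  have : nth 0 t i \in t by rewrite mem_nth ?Hsz.
  by rewrite (perm_mem Ht) mem_iota.
have f_inj : injective (fun i => Ordinal (Hlt i)).
  move=> i j [] /eqP; rewrite nth_uniq ?Hsz // ?(perm_uniq Ht) ?iota_uniq //.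
  by move/eqP/val_inj.
exists (perm f_inj); apply: (@eq_from_nth _ 0); rewrite size_oneline ?Hsz //.
by move=> i Hi; rewrite -[i]/(val (Ordinal Hi)) nth_oneline permE.
Qed.

Lemma gap_sorted_onelineP d n (s : 'S_n) :
  reflect (forall i l : 'I_n, i + d <= l -> s i < s l) (gap_sorted d (oneline s)).
Proof.
apply: (iffP (gap_sortedP _ _)) => H i l Hil.
  by rewrite -!nth_oneline; apply: H; rewrite ?size_oneline.
rewrite size_oneline => Hl; have Hi : i < n by lia.
by rewrite -[i]/(val (Ordinal Hi)) -[l]/(val (Ordinal Hl)) !nth_oneline H.
Qed.

Lemma avoids_1gt4 n (s : 'S_n) : pop_avoids pop_1gt4 s = gap_sorted 3 (oneline s).
Proof.
apply/idP/gap_sorted_onelineP => [Hav i l Hil | Hg].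
  rewrite ltnNge leq_eqVlt negb_or; apply/andP; split.
    by apply/eqP => /val_inj /perm_inj Eil; move: Hil; rewrite Eil; lia.
  apply: contra Hav => Hli; apply/existsP.
  have h1 : i.+1 < n by have := ltn_ord l; lia.
  have h2 : i.+2 < n by have := ltn_ord l; lia.
  exists [ffun x : 'I_4 => nth l [:: i; Ordinal h1; Ordinal h2; l] x].
  apply/andP; split; last by rewrite /= !ffunE !inordK //= andbT.
  apply/forallP => x; apply/forallP => y; apply/implyP; rewrite !ffunE.
  by case: x => [[|[|[|[|x]]]] Hx] //=; case: y => [[|[|[|[|y]]]] Hy] //= _; lia.
apply/negP; rewrite /pop_contains /=.
move=> /existsP [idx /andP [/forallP Hinc /andP [Hrel _]]].
have mono x y : x < y < 4 -> idx (inord x) < idx (inord y).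
  move=> /andP [Hxy Hy]; move/forallP/(_ (inord y))/implyP: (Hinc (inord x)).
  by apply; rewrite !inordK //; lia.
have idx03 : idx (inord 0) + 3 <= idx (inord 3).
  by have := mono 0 1 isT; have := mono 1 2 isT; have := mono 2 3 isT; lia.
by rewrite ltnNge (ltnW (Hg _ _ idx03)) in Hrel.
Qed.

Lemma num_avoiders_1gt4 n :
  num_avoiders pop_1gt4 n = #|[set s : 'S_n | gap_sorted 3 (oneline s)]|.
Proof. by apply: eq_card => s; rewrite !inE avoids_1gt4. Qed.

Lemma num_avoiders_1gt4_small n : n < 4 -> num_avoiders pop_1gt4 n = n`!.
Proof.
move=> Hn; rewrite num_avoiders_1gt4 -card_Sn; apply: eq_card => s.
by rewrite !inE gap_sorted_small // size_oneline; lia.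
Qed.

Section PrefixBlock.

Variables (d m : nat) (bs : seq nat).
Hypothesis bs_perm : perm_eq bs (iota 0 (size bs)).
Hypothesis bs_gap_sorted : gap_sorted d bs.
Local Notation k := (size bs).

Lemma nth_bs_lt (j : 'I_k) : nth 0 bs j < k.
Proof.
have : nth 0 bs j \in bs by rewrite mem_nth.
by rewrite (perm_mem bs_perm) mem_iota.
Qed.

Definition block_fun (s : 'S_m) (i : 'I_(k + m)) : 'I_(k + m) :=
  match split i with
  | inl j => lshift m (Ordinal (nth_bs_lt j))
  | inr j => rshift k (s j)
  end.

Lemma oneline_block_fun s :
  [seq val (block_fun s i) | i <- enum 'I_(k + m)] = bs ++ map (addn k) (oneline s).
Proof.
apply: (@eq_from_nth _ 0).
  by rewrite size_map size_enum_ord size_cat size_map size_oneline.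
rewrite size_map size_enum_ord => i Hi.
rewrite (nth_map (Ordinal Hi)) ?size_enum_ord // -[i]/(val (Ordinal Hi)) nth_ord_enum.
rewrite /block_fun nth_cat; case: splitP => [j|j] /= -> //.
by rewrite addKn (nth_map 0) ?size_oneline // nth_oneline.
Qed.

Lemma perm_eq_block (s : 'S_m) :
  perm_eq (bs ++ map (addn k) (oneline s)) (iota 0 (k + m)).
Proof.
have -> : iota 0 (k + m) = iota 0 k ++ map (addn k) (iota 0 m).
  by rewrite iotaD add0n -iotaDl addn0.
by apply: perm_cat; rewrite ?perm_map ?perm_eq_oneline.
Qed.

Lemma block_fun_inj s : injective (block_fun s).
Proof.
have : uniq (bs ++ map (addn k) (oneline s)).
  by rewrite (perm_uniq (perm_eq_block s)) iota_uniq.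
rewrite -oneline_block_fun.
by move/injectiveP => H i j E; apply: H; rewrite /= E.
Qed.

Definition block (s : 'S_m) : 'S_(k + m) := perm (@block_fun_inj s).

Lemma oneline_block s : oneline (block s) = bs ++ map (addn k) (oneline s).
Proof. by rewrite -oneline_block_fun; apply: eq_map => i; rewrite permE. Qed.

Lemma block_inj : injective block.
Proof.
move=> s1 s2 /(congr1 (@oneline _)); rewrite !oneline_block => /(congr1 (drop k)).
by rewrite !drop_size_cat // => /(inj_map (@addnI k)) /oneline_inj.
Qed.

Lemma block_surj (p : 'S_(k + m)) : prefix bs (oneline p) -> exists s, p = block s.
Proof.
case/prefixP => u Hp.
have Hu : perm_eq u (iota k m).
  rewrite -(perm_cat2l bs) -Hp (perm_trans (perm_eq_oneline p)) //.
  by rewrite iotaD add0n perm_cat2r perm_sym.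
have Eu : u = map (addn k) (map (subn^~ k) u).
  rewrite -map_comp -[LHS]map_id; apply/eq_in_map => x.
  by rewrite (perm_mem Hu) mem_iota /= => Hx; lia.
have [s Hs] : exists s : 'S_m, oneline s = map (subn^~ k) u.
  apply: oneline_surj; apply: (perm_map_inj (@addnI k)).
  by rewrite -Eu -iotaDl addn0.
by exists s; apply: oneline_inj; rewrite oneline_block Hp Hs -Eu.
Qed.

Lemma gap_sorted_block s : gap_sorted d (oneline (block s)) = gap_sorted d (oneline s).
Proof.
rewrite oneline_block gap_sorted_cat_shift //.
by apply/allP => x; rewrite (perm_mem bs_perm) mem_iota.
Qed.

Lemma card_gap_sorted_prefix :
  #|[set p : 'S_(k + m) | gap_sorted d (oneline p) && prefix bs (oneline p)]| =
  #|[set s : 'S_m | gap_sorted d (oneline s)]|.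
Proof.
rewrite -(card_imset _ block_inj); apply: eq_card => p; rewrite !inE.
apply/andP/imsetP => [[Hg /block_surj [s Hs]] | [s]].
  by exists s; rewrite // inE -gap_sorted_block -Hs.
by rewrite inE => Hs ->; rewrite gap_sorted_block oneline_block prefix_prefix.
Qed.

End PrefixBlock.

Lemma card_prefix_1gt4 n bs : perm_eq bs (iota 0 (size bs)) -> gap_sorted 3 bs ->
  size bs <= n ->
  #|[set p : 'S_n | gap_sorted 3 (oneline p) && prefix bs (oneline p)]| =
  num_avoiders pop_1gt4 (n - size bs).
Proof.
move=> Hp Hg Hn; rewrite num_avoiders_1gt4.
by have := card_gap_sorted_prefix (n - size bs) Hp Hg; rewrite subnKC.
Qed.

Lemma num_avoiders_1gt4S4 m : num_avoiders pop_1gt4 m.+4 =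
  num_avoiders pop_1gt4 m.+3 + num_avoiders pop_1gt4 m.+2 +
  3 * num_avoiders pop_1gt4 m.+1 + num_avoiders pop_1gt4 m.
Proof.
pose G := [set s : 'S_m.+4 | gap_sorted 3 (oneline s)].
transitivity (\sum_(s in G) \sum_(b <- blocks_1gt4 | prefix b (oneline s)) 1).
  rewrite num_avoiders_1gt4 -sum1_card; apply: eq_bigr => s; rewrite inE => Hs.
  by rewrite sum1_count count_prefix_blocks_1gt4 ?size_oneline ?perm_eq_oneline.
rewrite (exchange_big_dep predT) //=.
rewrite (eq_bigr (fun b =>
  #|[set s : 'S_m.+4 | gap_sorted 3 (oneline s) && prefix b (oneline s)]|)); last first.
  by move=> b _; rewrite -sum1_card; apply: eq_bigl => s; rewrite !inE.
rewrite !big_cons big_nil !card_prefix_1gt4 //= !subSS !subn0.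
lia.
Qed.

Local Open Scope ring_scope.

Lemma coef_den_1gt4 i : den_1gt4`_i = [:: 1; -1; -1; -3; -1]`_i.
Proof.
rewrite /den_1gt4 !coefB coef1 coefX !coefXn coefCM coefXn.
by case: i => [|[|[|[|[|i]]]]] //=; rewrite nth_nil; lia.
Qed.

Lemma den_1gt4_conv (f : nat -> nat) :
  f 0%N = 1%N -> f 1%N = 1%N -> f 2%N = 2%N -> f 3%N = 6%N ->
  (forall m, f m.+4 = (f m.+3 + f m.+2 + 3 * f m.+1 + f m)%N) ->
  forall n, \sum_(k < n.+1) den_1gt4`_k * (f (n - k)%N)%:Z = (n == 0%N)%:R.
Proof.
move=> f0 f1 f2 f3 fS n.
rewrite -(big_mkord xpredT (fun k => den_1gt4`_k * (f (n - k)%N)%:Z)).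
under eq_bigr do rewrite coef_den_1gt4.
case: n => [|[|[|[|m]]]]; try by rewrite unlock /= ?f0 ?f1 ?f2 ?f3; lia.
do 5 rewrite big_ltn //; rewrite big1_seq => [|i]; last first.
  by rewrite mem_iota => /and3P [_ Hi _]; rewrite nth_default ?mul0r.
by rewrite /= !subSS !subn0 fS; lia.
Qed.

Theorem theorem3p4 :
  let a := num_avoiders pop_1gt4 in
  [/\ [/\ a 0%N = 1%N, a 1%N = 1%N, a 2%N = 2%N & a 3%N = 6%N],
      (forall n : nat, (4 <= n)%N ->
         a n = (a n.-1 + a n.-2 + 3 * a (n - 3) + a (n - 4))%N)
    & (forall n : nat,
         \sum_(k < n.+1) den_1gt4`_k * (a (n - k)%N)%:Z = (n == 0%N)%:R)].
Proof.
move=> a.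
have [a0 a1 a2 a3] : [/\ a 0 = 1, a 1 = 1, a 2 = 2 & a 3 = 6]%N.
  by rewrite /a !num_avoiders_1gt4_small.
split=> //.
  by case=> [|[|[|[|m]]]] // _; rewrite /a num_avoiders_1gt4S4 /= !subSS !subn0.
exact: den_1gt4_conv a0 a1 a2 a3 (@num_avoiders_1gt4S4).
Qed.
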